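(* For every integer $n\ge4$ and every integer $d$, $p_{n,d}(1,2)=p_{n,d}(1,3)$.
   Context: A cycle $(c_1\cdots c_k)$ means $c_1\mapsto c_2\mapsto\cdots\mapsto c_k\mapsto c_1$; $\operatorname{cdes}(c)=\lvert\{t\in[k]:c_t>c_{t+1}\}\rvert$, $\operatorname{casc}(c)=\lvert\{t\in[k]:c_t<c_{t+1}\}\rvert$ with $c_{k+1}=c_1$; the cyclic weight of a cycle is $\min(\operatorname{cdes}(c),\operatorname{casc}(c))$ and the cyclic weight of a permutation is the sum over its cycles. An odd order permutation is one all of whose cycles have odd length. $p_{n,d}(i,j)$ is the number of odd order permutations $\pi$ of $[n]$ with cyclic weight $d$ such that $\pi(i)=n$ and $\pi(n)=j$ (i.e. containing $i\,n\,j$ as a cyclic factor). *)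

(* The set [n] = {1,...,n} is modelled by 'I_n, the label
   k+1 corresponding to the ordinal k (this bijection preserves order). *)
From mathcomp Require Import all_boot all_order all_algebra all_fingroup.
Set Implicit Arguments. Unset Strict Implicit. Unset Printing Implicit Defensive.

(* cdes of the cycle C of s: number of positions t with c_t > c_{t+1},
   i.e. number of x in C with x > s x. *)
Definition cdes_cycle (n : nat) (s : 'S_n) (C : {set 'I_n}) : nat :=
  #|[set x in C | s x < x]|.

Definition casc_cycle (n : nat) (s : 'S_n) (C : {set 'I_n}) : nat :=
  #|[set x in C | x < s x]|.

Definition cyc_weight (n : nat) (s : 'S_n) : nat :=
  \sum_(C in porbits s) minn (cdes_cycle s C) (casc_cycle s C).

Definition odd_order_perm (n : nat) (s : 'S_n) : bool :=
  [forall C in porbits s, odd #|C|].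

Definition p_count (n : nat) (d : int) (i j : nat) : nat :=
  #|[set s : 'S_n | [&& odd_order_perm s,
       Posz (cyc_weight s) == d,
       [exists x : 'I_n, (x.+1 == i) && ((s x).+1 == n)] &
       [exists y : 'I_n, (y.+1 == n) && ((s y).+1 == j)]]]|.

From mathcomp Require Import all_boot all_order all_algebra all_fingroup zify.
Set Implicit Arguments. Unset Strict Implicit. Unset Printing Implicit Defensive.

(* If pi contains the factor 1 n 2 but not 2 3,
   conjugating by the transposition (2 3) yields a permutation containing
   1 n 3 with the same cycle lengths and the same cyclic weight: 2 and 3 are
   adjacent values and never consecutive along a cycle of pi, so every cyclic
   descent and ascent survives.  If pi contains 1 n 2 3, then 3 is not followed
   by 1 because the cycles are odd, and we take the inverse of the conjugate of
   pi by the 4-cycle alpha = (1 2 n 3); it contains 1 n 3 2.  Inversion swaps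
   cyclic descents and ascents, while alpha turns the ascent 2 3 into a
   descent, the descent n 2 into an ascent, and preserves every other
   comparison along the cycles.  The symmetric construction with alpha^-1
   inverts this map, so the two sets counted are in bijection. *)

Local Open Scope group_scope.

Section PermCycles.
Variable T : finType.
Implicit Types (s g : {perm T}) (C : {set T}) (x y : T).

Lemma porbitJ s g x : porbit (s ^ g) (g x) = g @: porbit s x.
Proof.
apply/setP => y; apply/porbitP/imsetP => [[i ->] | [z /porbitP [i ->] ->]].
  by exists ((s ^+ i) x); rewrite ?mem_porbit // -conjXg permJ.
by exists i; rewrite -conjXg permJ.
Qed.

Lemma porbitsJ s g : porbits (s ^ g) = [set g @: C | C : {set T} in porbits s].
Proof.
apply/setP => C; apply/imsetP/imsetP => [[x _ ->] | [_ /imsetP [x _ ->] ->]].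
  by exists (porbit s (g^-1 x)); rewrite ?imset_f // -porbitJ permKV.
by exists (g x); rewrite ?porbitJ.
Qed.

Lemma mem_porbits_perm s C x : C \in porbits s -> (s x \in C) = (x \in C).
Proof.
by case/imsetP => y _ ->; rewrite porbit_sym -(expg1 s) porbit_perm porbit_sym.
Qed.

Lemma porbit_fconnect s x y : (y \in porbit s x) = fconnect s x y.
Proof.
apply/porbitP/idP => [[i ->] | /connectP [p /fpathP [i ->] ->]].
  by rewrite permX fconnect_iter.
by exists i; rewrite permX last_traject.
Qed.

Lemma card_porbit_fcycle s (p : seq T) x :
  fcycle s p -> uniq p -> x \in p -> #|porbit s x| = size p.
Proof.
move=> sp Up px; rewrite -(card_uniqP Up); apply: eq_card => y.
by rewrite porbit_fconnect (fconnect_cycle sp px).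
Qed.

End PermCycles.

Section Counting.
Variables T T' : finType.

Lemma card_in_bij (A : {set T}) (B : {set T'}) (f : T -> T') (g : T' -> T) :
  {in A, forall x, f x \in B} -> {in B, forall y, g y \in A} ->
  {in A, cancel f g} -> {in B, cancel g f} -> #|A| = #|B|.
Proof.
move=> fAB gBA fK gK; apply/eqP; rewrite eqn_leq.
rewrite -{1}(card_in_imset (can_in_inj fK)) -{2}(card_in_imset (can_in_inj gK)).
by rewrite !subset_leq_card //; apply/subsetP => _ /imsetP [x Ax ->]; auto.
Qed.

Lemma card_set_swap (C : {set T}) (P Q : pred T) a b :
  (a \in C) = (b \in C) -> P a -> ~~ Q a -> Q b -> ~~ P b ->
  {in C, forall y, y != a -> y != b -> P y = Q y} ->
  #|[set y in C | P y]| = #|[set y in C | Q y]|.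
Proof.
move=> abC Pa Qa Qb Pb PQ; have [aC | aC] := boolP (a \in C).
  rewrite (cardsD1 a) (cardsD1 b [set y in C | Q y]) !inE -abC aC Pa Qb.
  congr (_ + _); apply: eq_card => y; rewrite !inE.
  have [-> | ya] := eqVneq y a; first by rewrite (negbTE Qa) !andbF.
  have [-> | yb] := eqVneq y b; first by rewrite (negbTE Pb) !andbF.
  by have [yC | //] := boolP (y \in C); rewrite PQ.
apply: eq_card => y; rewrite !inE; have [yC | //] := boolP (y \in C).
have bC : b \notin C by rewrite -abC.
by rewrite PQ //; [apply: contraNneq aC | apply: contraNneq bC] => <-.
Qed.

End Counting.

Section CyclicWeight.
Variable n : nat.
Implicit Types (s g : 'S_n) (C : {set 'I_n}).

Lemma card_edgesJ s g C (P : rel 'I_n) :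
  #|[set y in g @: C | P y ((s ^ g) y)]| = #|[set x in C | P (g x) (g (s x))]|.
Proof.
rewrite -[RHS](card_imset _ (@perm_inj _ g)); apply: eq_card => y.
have [x ->] : exists x, y = g x by exists (g^-1 y); rewrite permKV.
by rewrite !inE !(mem_imset _ _ (@perm_inj _ g)) permJ inE.
Qed.

Lemma cyc_weightJ s g : cyc_weight (s ^ g) =
  \sum_(C in porbits s)
    minn #|[set x in C | g (s x) < g x]| #|[set x in C | g x < g (s x)]|.
Proof.
rewrite /cyc_weight porbitsJ big_imset => [|C D _ _]; last exact/imset_inj/perm_inj.
apply: eq_bigr => C _; rewrite /cdes_cycle /casc_cycle.
by rewrite (card_edgesJ s g C (fun x y => y < x)) (card_edgesJ s g C (fun x y => x < y)).
Qed.

Lemma card_edgesV s C (P : rel 'I_n) : C \in porbits s ->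
  #|[set y in C | P y (s^-1 y)]| = #|[set x in C | P (s x) x]|.
Proof.
move=> sC; rewrite -[RHS](card_imset _ (@perm_inj _ s)); apply: eq_card => y.
have [x ->] : exists x, y = s x by exists (s^-1 y); rewrite permKV.
by rewrite !inE (mem_imset _ _ (@perm_inj _ s)) inE permK mem_porbits_perm.
Qed.

Lemma cyc_weightV s : cyc_weight s^-1 = cyc_weight s.
Proof.
rewrite /cyc_weight porbitsV; apply: eq_bigr => C sC.
by rewrite /cdes_cycle /casc_cycle (card_edgesV (fun x y => y < x) sC)
  (card_edgesV (fun x y => x < y) sC) minnC.
Qed.

Lemma odd_order_permJ s g : odd_order_perm (s ^ g) = odd_order_perm s.
Proof.
rewrite /odd_order_perm porbitsJ; apply/forall_inP/forall_inP => oddC C.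
  by move=> sC; rewrite -(card_imset _ (@perm_inj _ g)) oddC ?imset_f.
by case/imsetP => D sD ->; rewrite card_imset ?oddC //; apply: perm_inj.
Qed.

Lemma odd_order_permV s : odd_order_perm s^-1 = odd_order_perm s.
Proof. by rewrite /odd_order_perm porbitsV. Qed.

Lemma ltn_tperm (a b x y : 'I_n) : b = a.+1 :> nat ->
  ~~ ((x == a) && (y == b)) -> ~~ ((x == b) && (y == a)) ->
  (tperm a b x < tperm a b y) = (x < y).
Proof.
by rewrite !permE /= -!(inj_eq val_inj) /= => ab; do !case: ifP => /= ?; lia.
Qed.

End CyclicWeight.

Section FactorPerms.
Variable n : nat.

Definition factor_perms (d : int) (i j : 'I_n.+1) : {set 'S_n.+1} :=
  [set s | [&& odd_order_perm s, Posz (cyc_weight s) == d,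
              s i == ord_max & s ord_max == j]].

Lemma p_countE d (i j : 'I_n.+1) : p_count n.+1 d i.+1 j.+1 = #|factor_perms d i j|.
Proof.
apply: eq_card => s; rewrite !inE; congr [&& _, _, _ & _].
  apply/existsP/eqP => [[x /andP [/eqP [/val_inj ->] /eqP [si]]] | si].
    exact: val_inj.
  by exists i; rewrite si !eqxx.
apply/existsP/eqP => [[y /andP [/eqP [ym] /eqP [smj]]] | smj].
  by apply: val_inj => /=; rewrite -smj (_ : y = ord_max) //; apply: val_inj.
by exists ord_max; rewrite smj !eqxx.
Qed.

End FactorPerms.

Section Labels.
Variable m : nat.
Local Notation n := m.+3.
Implicit Types s : 'S_n.+1.

Definition l1 : 'I_n.+1 := ord0.
Definition l2 : 'I_n.+1 := Ordinal (isT : 1 < n.+1).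
Definition l3 : 'I_n.+1 := Ordinal (isT : 2 < n.+1).

Definition swap23 : 'S_n.+1 := tperm l2 l3.
Definition alpha : 'S_n.+1 := tperm l1 l2 * tperm l1 ord_max * tperm l1 l3.

Lemma alphaE :
  [/\ alpha l1 = l2, alpha l2 = ord_max, alpha ord_max = l3 & alpha l3 = l1].
Proof. by split; rewrite !permM !permE /= ?eqxx. Qed.

Lemma alphaVE :
  [/\ alpha^-1 l2 = l1, alpha^-1 ord_max = l2, alpha^-1 l3 = ord_max
     & alpha^-1 l1 = l3].
Proof.
case: alphaE => a1 a2 am a3.
by split; apply: (canLR (permK alpha)); rewrite ?a1 ?a2 ?am ?a3.
Qed.

Lemma alpha_id x : x != l1 -> x != l2 -> x != ord_max -> x != l3 -> alpha x = x.
Proof. by move=> *; rewrite !permM !tpermD // eq_sym. Qed.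

Lemma swap23E :
  [/\ swap23 l1 = l1, swap23 ord_max = ord_max, swap23 l2 = l3 & swap23 l3 = l2].
Proof. by split; rewrite /swap23 (tpermL, tpermR, tpermD). Qed.

Section CyclicFactor.
Variable s : 'S_n.+1.
Hypotheses (s_l1 : s l1 = ord_max) (s_max : s ord_max = l2).

Lemma cyc_weight_swap23 : s l2 != l3 -> cyc_weight (s ^ swap23) = cyc_weight s.
Proof.
move=> s_l2; rewrite cyc_weightJ; apply: eq_bigr => C _.
have no23 x : (x == l2) && (s x == l3) = false.
  by apply/negbTE; apply: contra s_l2 => /andP [/eqP <-].
have no32 x : (x == l3) && (s x == l2) = false.
  by apply/negbTE/andP => -[/eqP -> /eqP]; rewrite -s_max => /perm_inj/(congr1 val)/eqP.
rewrite /cdes_cycle /casc_cycle; congr minn; apply: eq_card => x;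
  by rewrite !inE ltn_tperm // ?no23 ?no32 // andbC ?no23 ?no32.
Qed.

Hypothesis s_l2 : s l2 = l3.

Lemma odd_order_perm_l3_neq_l1 : odd_order_perm s -> s l3 != l1.
Proof.
move=> odd_s; apply/eqP => s_l3.
have s_cycle : fcycle s [:: l1; ord_max; l2; l3].
  by rewrite /= s_l1 s_max s_l2 s_l3 !eqxx.
have l1_cycle : porbit s l1 \in porbits s by apply: imset_f.
have := forall_inP odd_s _ l1_cycle.
by rewrite (card_porbit_fcycle s_cycle) ?mem_head.
Qed.

Hypothesis s_l3 : s l3 != l1.

Lemma alpha_edge x : x != ord_max -> x != l2 ->
  ((alpha (s x) < alpha x) = (s x < x)) /\ ((alpha x < alpha (s x)) = (x < s x)).
Proof.
case: alphaE => a1 _ am a3 xm x2.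
have [-> | x1] := eqVneq x l1; first by rewrite s_l1 a1 am.
have sxm : s x != ord_max by rewrite -s_l1 (inj_eq perm_inj).
have sx2 : s x != l2 by rewrite -s_max (inj_eq perm_inj).
have sx3 : s x != l3 by rewrite -s_l2 (inj_eq perm_inj).
have [x3 | x3] := eqVneq x l3.
  subst x; rewrite a3 alpha_id //; move: s_l3 sx2 sx3.
  by rewrite -!(inj_eq val_inj) /= => *; split; lia.
rewrite (alpha_id x1 x2 xm x3).
have [-> | sx1] := eqVneq (s x) l1; last by rewrite alpha_id.
rewrite a1; move: x1 x2 x3; rewrite -!(inj_eq val_inj) /= => *; split; lia.
Qed.

Lemma cyc_weight_alpha : cyc_weight (s ^ alpha) = cyc_weight s.
Proof.
have [a1 a2 am a3] := alphaE.
rewrite cyc_weightJ; apply: eq_bigr => C sC.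
have l2_max_C : (l2 \in C) = (ord_max \in C) by rewrite -s_max mem_porbits_perm.
rewrite /cdes_cycle /casc_cycle; congr minn.
  apply: (card_set_swap l2_max_C); rewrite ?s_l2 ?s_max ?a1 ?a2 ?a3 ?am //.
  by move=> y _ y2 ym; case: (alpha_edge ym y2).
apply: (card_set_swap (esym l2_max_C)); rewrite ?s_l2 ?s_max ?a1 ?a2 ?a3 ?am //.
by move=> y _ ym y2; case: (alpha_edge ym y2).
Qed.

End CyclicFactor.

Definition to13 (s : 'S_n.+1) := if s l2 == l3 then (s^-1) ^ alpha else s ^ swap23.
Definition to12 (s : 'S_n.+1) := if s l3 == l2 then (s^-1) ^ alpha^-1 else s ^ swap23.

Lemma odd_order_perm_to13 s : odd_order_perm (to13 s) = odd_order_perm s.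
Proof. by rewrite /to13; case: ifP; rewrite odd_order_permJ ?odd_order_permV. Qed.

Lemma odd_order_perm_to12 s : odd_order_perm (to12 s) = odd_order_perm s.
Proof. by rewrite /to12; case: ifP; rewrite odd_order_permJ ?odd_order_permV. Qed.

Lemma cyc_weight_to13 s : odd_order_perm s -> s l1 = ord_max -> s ord_max = l2 ->
  cyc_weight (to13 s) = cyc_weight s.
Proof.
move=> odd_s s_l1 s_max; rewrite /to13; case: eqP => [s_l2 | /eqP s_l2].
  by rewrite conjVg cyc_weightV cyc_weight_alpha // odd_order_perm_l3_neq_l1.
exact: cyc_weight_swap23.
Qed.

Lemma to13_factor s : s l1 = ord_max -> s ord_max = l2 ->
  to13 s l1 = ord_max /\ to13 s ord_max = l3.
Proof.
case: alphaE swap23E => _ a2 am a3 [w1 wm w2 _] s_l1 s_max; rewrite /to13.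
case: eqP => [s_l2 | _]; split.
- by rewrite -a3 permJ -s_l2 permK a2.
- by rewrite -a2 permJ -s_max permK am.
- by rewrite -w1 permJ s_l1 wm.
- by rewrite -wm permJ s_max w2.
Qed.

Lemma to12_factor s : s l1 = ord_max -> s ord_max = l3 ->
  to12 s l1 = ord_max /\ to12 s ord_max = l2.
Proof.
case: alphaVE swap23E => v2 vm v3 _ [w1 wm _ w3] s_l1 s_max; rewrite /to12.
case: eqP => [s_l3 | _]; split.
- by rewrite -v2 permJ -s_l3 permK v3.
- by rewrite -v3 permJ -s_max permK vm.
- by rewrite -w1 permJ s_l1 wm.
- by rewrite -wm permJ s_max w3.
Qed.

Lemma to12K s : s l1 = ord_max -> s ord_max = l2 -> to12 (to13 s) = s.
Proof.
case: alphaE swap23E => a1 _ am _ [_ _ w2 w3] s_l1 s_max; rewrite /to13 /to12.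
case: (eqVneq (s l2) l3) => [s_l2 | s_l2].
  by rewrite -am permJ -s_l1 permK a1 eqxx -conjVg invgK conjgK.
rewrite -w2 permJ -w3 (inj_eq perm_inj) w3 (negbTE s_l2).
by rewrite -conjgM tperm2 conjg1.
Qed.

Lemma to13K s : s l1 = ord_max -> s ord_max = l3 -> to13 (to12 s) = s.
Proof.
case: alphaVE swap23E => _ vm _ v1 [_ _ w2 w3] s_l1 s_max; rewrite /to13 /to12.
case: (eqVneq (s l3) l2) => [s_l3 | s_l3].
  by rewrite -vm permJ -s_l1 permK v1 eqxx -conjVg invgK conjgKV.
rewrite -w3 permJ -w2 (inj_eq perm_inj) w2 (negbTE s_l3).
by rewrite -conjgM tperm2 conjg1.
Qed.

Lemma card_factor_perms_l2_l3 d : #|factor_perms d l1 l2| = #|factor_perms d l1 l3|.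
Proof.
apply: (card_in_bij (f := to13) (g := to12)) => s;
  rewrite inE => /and4P [odd_s /eqP w_s /eqP s_l1 /eqP s_max].
- have [t_l1 t_max] := to13_factor s_l1 s_max.
  by rewrite inE odd_order_perm_to13 cyc_weight_to13 // odd_s w_s t_l1 t_max !eqxx.
- have [t_l1 t_max] := to12_factor s_l1 s_max.
  have odd_t : odd_order_perm (to12 s) by rewrite odd_order_perm_to12.
  by rewrite inE odd_t -(cyc_weight_to13 odd_t t_l1 t_max) to13K // w_s t_l1 t_max !eqxx.
- exact: to12K.
- exact: to13K.
Qed.

End Labels.

Local Close Scope group_scope.

Theorem lemma4p2 (n : nat) (d : int) (hn : 4 <= n) :
  p_count n d 1 2 = p_count n d 1 3.
Proof.
case: n hn => [|[|[|[|m]]]] // _.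
by rewrite (p_countE d (l1 m) (l2 m)) (p_countE d (l1 m) (l3 m)) card_factor_perms_l2_l3.
Qed.
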